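(* The graph $K_{10}-3K_2$ has a triangular embedding in an orientable surface, and the octahedral graph $O_{10}$ has orientable genus $\lceil (4\cdot 2)/3\rceil = 3$.
   Context: $K_{10}-3K_2$ is $K_{10}$ with the 3 edges of a matching removed. $O_{10}$ is $K_{10}$ with the edges of a perfect matching removed. An embedding is triangular if it is cellular and every face is bounded by a closed walk of length 3. *)

(* Combinatorial (rotation-system) model of orientable embeddings. *)
From mathcomp Require Import all_boot all_fingroup.
Set Implicit Arguments. Unset Strict Implicit. Unset Printing Implicit Defensive.

Section Embeddings.
Variable n : nat.
Implicit Types (adj : rel 'I_n) (R : 'I_n -> {perm 'I_n}).

Definition darts adj : {set 'I_n * 'I_n} := [set d | adj d.1 d.2].

Definition num_edges adj : nat := #|darts adj| %/ 2.

Definition is_rotation adj R : Prop :=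
  forall v : 'I_n,
    (forall u, ~~ adj v u -> R v u = u) /\
    (forall u w, adj v u -> adj v w -> fconnect (fun x => R v x) u w).

Definition face_step R (d : 'I_n * 'I_n) : 'I_n * 'I_n := (d.2, R d.2 d.1).

(* faces of the cellular orientable embedding determined by R = orbits of face_step *)
Definition faces adj R : {set {set 'I_n * 'I_n}} :=
  [set [set y | fconnect (face_step R) d y] | d in darts adj].

Definition num_faces adj R : nat := #|faces adj R|.

(* The embedding given by R lies on the orientable surface of genus g:
   Euler's formula V - E + F = 2 - 2g. *)
Definition rot_genus_is adj R g : Prop :=
  n + num_faces adj R + 2 * g = 2 + num_edges adj.

Definition rot_genus_ge adj R g : Prop :=
  n + num_faces adj R + 2 * g <= 2 + num_edges adj.

Definition orientable_genus_is adj g : Prop :=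
  (exists R, is_rotation adj R /\ rot_genus_is adj R g) /\
  (forall R, is_rotation adj R -> rot_genus_ge adj R g).

Definition has_triangular_orientable_embedding adj : Prop :=
  exists R, is_rotation adj R /\
    forall d, d \in darts adj -> fingraph.order (face_step R) d = 3.

End Embeddings.

(* K_10 - 3K_2 : vertices 0..9, remove the matching {0,1},{2,3},{4,5} *)
Definition K10_minus_3K2 : rel 'I_10 :=
  fun u v => (u != v) && ~~ (((val u)./2 == (val v)./2) && (val u < 6)).

(* O_10 : K_10 minus the perfect matching {0,1},{2,3},...,{8,9} *)
Definition O10 : rel 'I_10 := fun u v => (val u)./2 != (val v)./2.

(* A rotation system can be given by a cyclic list of the neighbours of each
   vertex.  For K10 - 3K2 there is such a list whose faces are all triangles.
   Deleting the edges 67 and 89 from it yields a rotation system of O10 whose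
   faces are 24 triangles and 2 quadrilaterals, so Euler's formula
   10 - 40 + 26 = 2 - 2*3 gives genus 3.  Conversely, O10 is simple without
   vertices of degree 1, so no face of any rotation system has length 1 or 2;
   hence 3F <= 2E = 80, i.e. F <= 26, and every embedding has genus >= 3. *)

From mathcomp Require Import all_boot all_fingroup zmodp zify.
Set Implicit Arguments. Unset Strict Implicit. Unset Printing Implicit Defensive.

Section Orbits.
Variables (T : finType) (f : T -> T).

Lemma uniq_flatten_sets (cs : seq (seq T)) :
  uniq (flatten cs) -> [::] \notin cs -> uniq [seq [set x in c] | c <- cs].
Proof.
elim: cs => [|c cs IHcs] //=; rewrite cat_uniq inE negb_or.
case/and3P=> _ disj_c Ucs /andP[c_nil nil_cs]; rewrite IHcs // andbT.
apply/mapP=> -[c' cs_c' /setP Ec]; case: c c_nil disj_c Ec => [|x c] // _ disj_c Ec.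
case/hasP: disj_c; exists x; last by rewrite mem_head.
by apply/flattenP; exists c'; move: (Ec x); rewrite // !inE eqxx => <-.
Qed.

Lemma card_orbits_cycles (D : {set T}) (cs : seq (seq T)) :
  all (fcycle f) cs -> uniq (flatten cs) -> [::] \notin cs -> flatten cs =i D ->
  #|[set [set y | fconnect f x y] | x in D]| = size cs.
Proof.
move=> cyc_cs U nil_cs cs_D.
have orbitE c x : c \in cs -> x \in c -> [set y | fconnect f x y] = [set y in c].
  by move=> cs_c c_x; apply/setP=> y; rewrite !inE (fconnect_cycle (allP cyc_cs c cs_c) c_x).
rewrite -(size_map (fun c => [set y in c])) -(card_uniqP (uniq_flatten_sets U nil_cs)).
apply: eq_card => A; apply/imsetP/mapP=> [[x Dx ->] | [c cs_c ->]].
  have /flattenP[c cs_c c_x] : x \in flatten cs by rewrite cs_D.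
  by exists c; rewrite // (orbitE c).
case: c cs_c => [|x c] cs_c; first by rewrite cs_c in nil_cs.
exists x; last by rewrite (orbitE _ _ cs_c) ?mem_head.
by rewrite -cs_D; apply/flattenP; exists (x :: c); rewrite ?mem_head.
Qed.

Lemma eq_order (g : T -> T) : f =1 g -> fingraph.order f =1 fingraph.order g.
Proof. by move=> fg x; apply: eq_card => y; apply: eq_fconnect. Qed.

Hypothesis f_inj : injective f.

Lemma trivIset_orbits (D : {set T}) : trivIset [set [set y | fconnect f x y] | x in D].
Proof.
apply/trivIsetP=> _ _ /imsetP[x _ ->] /imsetP[y _ ->]; apply: contraR.
case/pred0Pn=> z /andP[]; rewrite !inE => xz yz; apply/eqP/setP=> w; rewrite !inE.
have sym_f : connect_sym (frel f) by move=> ? ?; apply: fconnect_sym.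
by rewrite (same_connect sym_f xz) (same_connect sym_f yz).
Qed.

Lemma order_gt2 x : f x != x -> f (f x) != x -> 2 < fingraph.order f x.
Proof.
move=> fx_x ffx_x; have uniq3 : uniq [:: x; f x; f (f x)].
  by rewrite /= !inE !negb_or (inj_eq f_inj) ![x == _]eq_sym fx_x ffx_x.
have <- : #|[:: x; f x; f (f x)]| = 3 by rewrite (card_uniqP uniq3).
apply/subset_leq_card/subsetP=> y.
rewrite !inE => /or3P[] /eqP->; [exact: connect0 | exact: fconnect1 | exact: (fconnect_iter f 2)].
Qed.

End Orbits.

Section RotationSystems.
Variables (n : nat) (adj : rel 'I_n).
Variable R : 'I_n -> {perm 'I_n}.
Implicit Type d : 'I_n * 'I_n.

Lemma face_step_inj : injective (face_step R).
Proof. by move=> [a b] [c e] [<-] /perm_inj ->. Qed.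

Hypothesis rotR : is_rotation adj R.

Lemma rotation_adj v u : adj v u -> adj v (R v u).
Proof.
move=> vu; apply/negPn/negP=> not_vRu.
by have /perm_inj Ru := (rotR v).1 _ not_vRu; rewrite Ru vu in not_vRu.
Qed.

Lemma rotation_fixed_adj v u w : adj v u -> R v u = u -> adj v w -> w = u.
Proof.
move=> vu Ru vw; have cyc_u : fcycle (R v) [:: u] by rewrite /= Ru eqxx.
by have := (rotR v).2 u w vu vw; rewrite (fconnect_cycle cyc_u (mem_head _ _)) inE => /eqP.
Qed.

Hypothesis adj_sym : symmetric adj.

Lemma face_step_darts d : d \in darts adj -> face_step R d \in darts adj.
Proof. by case: d => a b; rewrite !inE /= adj_sym; apply: rotation_adj. Qed.

Lemma cover_faces_sub_darts : cover (faces adj R) \subset darts adj.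
Proof.
apply/bigcupsP=> _ /imsetP[d Dd ->]; apply/subsetP=> y; rewrite inE => /iter_findex <-.
by elim: (findex _ d y) => [|i IHi] //; rewrite iterS face_step_darts.
Qed.

Hypothesis adj_irr : irreflexive adj.
Hypothesis no_leaf : forall v u, adj v u -> exists2 w, adj v w & w != u.

Lemma face_step_neq d : d \in darts adj -> face_step R d != d.
Proof.
by case: d => a b; rewrite inE /=; apply: contraL => /eqP[<- _]; rewrite adj_irr.
Qed.

Lemma face_step2_neq d : d \in darts adj -> face_step R (face_step R d) != d.
Proof.
case: d => a b; rewrite inE /= adj_sym => ba; apply/eqP=> -[Rba _].
have [w bw /eqP[]] := no_leaf ba; exact: rotation_fixed_adj ba Rba bw.
Qed.

Lemma three_num_faces_leq_darts : 3 * num_faces adj R <= #|darts adj|.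
Proof.
have trivF : trivIset (faces adj R) := trivIset_orbits face_step_inj (darts adj).
rewrite /num_faces mulnC -sum_nat_const (leq_trans _ (subset_leq_card cover_faces_sub_darts)) //.
rewrite -(eqP trivF); apply: leq_sum => _ /imsetP[d Dd ->].
have -> : #|[set y | fconnect (face_step R) d y]| = fingraph.order (face_step R) d.
  by apply: eq_card => y; rewrite inE.
by apply: order_gt2; [apply: face_step_inj | apply: face_step_neq | apply: face_step2_neq].
Qed.

End RotationSystems.

Section CycleRotations.
Variables (n : nat) (rho : 'I_n -> seq 'I_n).
Hypothesis rho_uniq : forall v, uniq (rho v).

Definition cycle_rotation v : {perm 'I_n} := perm (can_inj (prev_next (rho_uniq v))).

Lemma cycle_rotationE v : cycle_rotation v =1 next (rho v).
Proof. by move=> u; rewrite permE. Qed.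

Lemma is_rotation_cycle_rotation (adj : rel 'I_n) :
  (forall v u, (u \in rho v) = adj v u) -> is_rotation adj cycle_rotation.
Proof.
move=> rho_adj v; split=> [u | u w]; rewrite -!rho_adj.
  by move=> v_u; rewrite cycle_rotationE next_nth (negbTE v_u).
move=> vu vw; rewrite (eq_fconnect (cycle_rotationE v)).
by rewrite (fconnect_cycle (cycle_next (rho_uniq v)) vu).
Qed.

Definition face_next (d : 'I_n * 'I_n) := (d.2, next (rho d.2) d.1).

Lemma face_step_cycle_rotation : face_step cycle_rotation =1 face_next.
Proof. by move=> d; rewrite /face_step cycle_rotationE. Qed.

Lemma faces_cycle_rotation adj :
  faces adj cycle_rotation = [set [set y | fconnect face_next d y] | d in darts adj].
Proof.
apply: eq_imset => d; apply/setP=> y; rewrite !inE.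
exact: eq_fconnect face_step_cycle_rotation d y.
Qed.

End CycleRotations.

(* Unlike [enum 'I_n.+1], this enumeration reduces under [vm_compute]. *)
Definition ords n : seq 'I_n.+1 := map inZp (iota 0 n.+1).

Lemma mem_ords n (x : 'I_n.+1) : x \in ords n.
Proof.
apply/mapP; exists (val x); first by rewrite mem_iota ltn_ord.
by apply: val_inj; rewrite /= modn_small.
Qed.

Lemma all_ords n (P : pred 'I_n.+1) : all P (ords n) -> forall x, P x.
Proof. by move=> /allP allP x; apply/allP/mem_ords. Qed.

Definition ord_pairs n := [seq (u, v) | u <- ords n, v <- ords n].

Lemma all_ord_pairs n (P : pred ('I_n.+1 * 'I_n.+1)) : all P (ord_pairs n) -> forall d, P d.
Proof. by move=> /allP allP [u v]; apply/allP/allpairs_f; apply: mem_ords. Qed.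

Definition rotation_K10_minus_3K2 : seq (seq nat) :=
  [:: [:: 2; 9; 8; 7; 5; 3; 6; 4]; [:: 2; 7; 4; 3; 8; 9; 6; 5];
      [:: 0; 4; 8; 6; 7; 1; 5; 9]; [:: 0; 5; 8; 1; 4; 9; 7; 6];
      [:: 0; 6; 9; 3; 1; 7; 8; 2]; [:: 0; 7; 9; 2; 1; 6; 8; 3];
      [:: 0; 3; 7; 2; 8; 5; 1; 9; 4]; [:: 0; 8; 4; 1; 2; 6; 3; 9; 5];
      [:: 0; 9; 1; 3; 5; 6; 2; 4; 7]; [:: 0; 2; 5; 7; 3; 4; 6; 1; 8]].

Definition rhoK (v : 'I_10) : seq 'I_10 := map inZp (nth [::] rotation_K10_minus_3K2 v).

Lemma rhoK_uniq v : uniq (rhoK v).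
Proof. by move: v; apply: all_ords; vm_compute. Qed.

Lemma rhoK_adj v u : (u \in rhoK v) = K10_minus_3K2 v u.
Proof.
have /all_ord_pairs/(_ (v, u))/eqP// :
  all (fun d => (d.2 \in rhoK d.1) == K10_minus_3K2 d.1 d.2) (ord_pairs 9) by vm_compute.
Qed.

Lemma K10_minus_3K2_triangular : has_triangular_orientable_embedding K10_minus_3K2.
Proof.
exists (cycle_rotation rhoK_uniq); split; first exact: is_rotation_cycle_rotation rhoK_adj.
pose g := face_next rhoK.
have triangles : all (fun d => K10_minus_3K2 d.1 d.2 ==>
    fcycle g (traject g d 3) && uniq (traject g d 3)) (ord_pairs 9) by vm_compute.
move=> d; rewrite inE (eq_order (face_step_cycle_rotation rhoK_uniq)) => Kd.
have /andP[cycle3 uniq3] := implyP (all_ord_pairs triangles d) Kd.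
by rewrite (order_cycle cycle3 uniq3) // mem_head.
Qed.

Lemma O10_sym : symmetric O10.
Proof. by move=> u v; rewrite /O10 eq_sym. Qed.

Lemma O10_irr : irreflexive O10.
Proof. by move=> u; rewrite /O10 eqxx. Qed.

Lemma O10_no_leaf v u : O10 v u -> exists2 w, O10 v w & w != u.
Proof.
have /all_ord_pairs/(_ (v, u))/implyP/[apply]/hasP[w _ /andP[]] :
  all (fun d => O10 d.1 d.2 ==> has (fun w => O10 d.1 w && (w != d.2)) (ords 9)) (ord_pairs 9)
  by vm_compute.
by exists w.
Qed.

Lemma O10_sub_K10_minus_3K2 : subrel O10 K10_minus_3K2.
Proof.
move=> v u Ovu; rewrite /K10_minus_3K2 (negbTE Ovu) andbT.
by apply: contraNneq Ovu => ->.
Qed.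

Definition rhoO (v : 'I_10) : seq 'I_10 := [seq u <- rhoK v | O10 v u].

Lemma rhoO_uniq v : uniq (rhoO v).
Proof. exact/filter_uniq/rhoK_uniq. Qed.

Lemma rhoO_adj v u : (u \in rhoO v) = O10 v u.
Proof. by rewrite mem_filter rhoK_adj andb_idr //; apply: O10_sub_K10_minus_3K2. Qed.

Definition faces_O10 : seq (seq nat) :=
  [:: [:: 0; 2; 4]; [:: 0; 3; 5]; [:: 0; 4; 6]; [:: 0; 5; 7]; [:: 0; 6; 3];
      [:: 0; 7; 8]; [:: 0; 8; 1; 9]; [:: 0; 9; 2]; [:: 1; 2; 5]; [:: 1; 3; 4];
      [:: 1; 4; 7]; [:: 1; 5; 6]; [:: 1; 6; 9]; [:: 1; 7; 2]; [:: 1; 8; 3];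
      [:: 2; 6; 8]; [:: 2; 7; 3; 6]; [:: 2; 8; 4]; [:: 2; 9; 5]; [:: 3; 7; 9];
      [:: 3; 8; 5]; [:: 3; 9; 4]; [:: 4; 8; 7]; [:: 4; 9; 6]; [:: 5; 8; 6];
      [:: 5; 9; 7]].

Definition walk_darts (T : Type) (w : seq T) : seq (T * T) := zip w (rot 1 w).

Definition face_darts_O10 : seq (seq ('I_10 * 'I_10)) :=
  [seq walk_darts (map inZp w) | w <- faces_O10].

Lemma face_darts_O10_uniq : uniq (flatten face_darts_O10).
Proof. by vm_compute. Qed.

Lemma mem_face_darts_O10 : flatten face_darts_O10 =i darts O10.
Proof.
move=> d; rewrite [d \in darts _]inE; apply/eqP; move: d; apply: all_ord_pairs.
by vm_compute.
Qed.

Lemma card_darts_O10 : #|darts O10| = 80.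
Proof. by rewrite -(eq_card mem_face_darts_O10) (card_uniqP face_darts_O10_uniq). Qed.

Lemma num_faces_rhoO : num_faces O10 (cycle_rotation rhoO_uniq) = 26.
Proof.
rewrite /num_faces faces_cycle_rotation.
by rewrite (card_orbits_cycles _ face_darts_O10_uniq _ mem_face_darts_O10); vm_compute.
Qed.

Theorem mainTheorem6 :
  has_triangular_orientable_embedding K10_minus_3K2 /\
  orientable_genus_is O10 3.
Proof.
split; first exact: K10_minus_3K2_triangular.
split.
  exists (cycle_rotation rhoO_uniq); split; first exact: is_rotation_cycle_rotation rhoO_adj.
  by rewrite /rot_genus_is /num_edges num_faces_rhoO card_darts_O10.
move=> R rotR; have := three_num_faces_leq_darts rotR O10_sym O10_irr O10_no_leaf.
by rewrite /rot_genus_ge /num_edges card_darts_O10; lia.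
Qed.
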